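(* Let $\pi$ be a set of primes, $G$ a group and $G_0$ a subgroup of finite index in $G$. Let $A$ be a $\mathbb ZG$-module that is a $\mathbb ZG_0$-module quotient of some $\mathbb ZG_0$-module whose underlying abelian group is torsion-free of finite rank and $\pi$-spectral. Then $A$ is a $\mathbb ZG$-module quotient of some $\mathbb ZG$-module whose underlying abelian group is torsion-free of finite rank and $\pi$-spectral.
   Context: An abelian group has finite rank if its torsion-free rank and all $p$-ranks are finite; it is $\pi$-spectral if every prime $p$ for which it has a section isomorphic to $\mathbb Z_{p^\infty}$ lies in $\pi$. *)

From HB Require Import structures.
From mathcomp Require Import all_boot all_order all_algebra.
Set Implicit Arguments. Unset Strict Implicit. Unset Printing Implicit Defensive.
Import Order.TTheory GRing.Theory Num.Theory.

Section GroupDefs.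
Variable G : groupType.
Local Open Scope group_scope.

Definition is_subgroup (H : {pred G}) : Prop := group_closed H.

(* H has finite index in G: finitely many left cosets t H cover G *)
Definition finite_index (H : {pred G}) : Prop :=
  exists s : seq G, forall g : G, exists2 t, t \in s & t^-1 * g \in H.

(* act : G -> M -> M makes the abelian group M a Z H-module, i.e. the
   subgroup H acts on M by additive maps (only the values on H matter). *)
Definition is_action (H : {pred G}) (M : zmodType) (act : G -> M -> M) : Prop :=
  [/\ forall g (x y : M), g \in H -> act g (x + y)%R = (act g x + act g y)%R,
      forall x : M, act 1 x = x
    & forall g h (x : M), g \in H -> h \in H -> act (g * h) x = act g (act h x)].

Definition module_quotient_map (H : {pred G}) (B A : zmodType)
  (actB : G -> B -> B) (actA : G -> A -> A) (f : B -> A) : Prop :=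
  [/\ forall x y : B, f (x + y)%R = (f x + f y)%R,
      forall y : A, exists x : B, f x = y
    & forall g (x : B), g \in H -> f (actB g x) = actA g (f x)].
End GroupDefs.

Local Open Scope ring_scope.

Definition torsion_free (M : zmodType) : Prop :=
  forall (n : nat) (x : M), x *+ n.+1 = 0 -> x = 0.

Definition Z_independent (M : zmodType) (s : seq M) : Prop :=
  forall c : seq int, size c = size s ->
    \sum_(i < size s) s`_i *~ c`_i = 0 -> forall i, c`_i = 0.

Definition finite_tf_rank (M : zmodType) : Prop :=
  exists n : nat, forall s : seq M, Z_independent s -> (size s <= n)%N.

(* p-rank is finite: the F_p-space {x | p x = 0} is finite dimensional *)
Definition finite_p_rank (M : zmodType) (p : nat) : Prop :=
  exists n : nat, forall s : seq M,
    (forall x, x \in s -> x *+ p = 0) ->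
    (forall c : seq nat, size c = size s ->
        \sum_(i < size s) s`_i *+ nth 0%N c i = 0 -> forall i, (p %| nth 0%N c i)%N) ->
    (size s <= n)%N.

Definition finite_rank (M : zmodType) : Prop :=
  finite_tf_rank M /\ forall p, prime p -> finite_p_rank M p.

(* Z_{p^oo} is realised as Z[1/p]/Z, with Z[1/p] inside rat. *)
Definition in_Z1p (p : nat) (q : rat) : Prop := exists k : nat, denq q = (p ^ k)%:Z.
Definition is_intq (q : rat) : Prop := denq q = 1.

(* M has a section H/K (K <= H subgroups of M) isomorphic to Z_{p^oo}:
   f represents (on representatives) an isomorphism H/K -> Z[1/p]/Z. *)
Definition has_prufer_section (M : zmodType) (p : nat) : Prop :=
  exists (H K : {pred M}) (f : M -> rat),
    [/\ zmod_closed H, zmod_closed K & {subset K <= H}] /\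
    [/\ forall x, x \in H -> in_Z1p p (f x),
        forall x y, x \in H -> y \in H -> is_intq (f (x + y) - f x - f y),
        forall x, x \in H -> (is_intq (f x) <-> x \in K)
      & forall q, in_Z1p p q -> exists2 x, x \in H & is_intq (f x - q)].

Definition pi_spectral (pi : pred nat) (M : zmodType) : Prop :=
  forall p, prime p -> has_prufer_section M p -> p \in pi.

(* Take the induced module C = ZG (x)_{ZG0} B, realised on B^J for a left
   transversal T : J -> G of G0.  Since A is already a ZG-module, the map
   phi |-> sum_j T_j . f (phi_j) is a surjective ZG-module map C -> A.  As an
   abelian group C is the finite power B^J, and the three properties pass to
   finite direct products: torsion-free ranks add (by Gaussian elimination), and
   a Pruefer section of M x N either already lies in the fibre over M or has
   bounded denominators there, in which case multiplying by a power of p pushes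
   it down to N. *)

From HB Require Import structures.
From mathcomp Require Import all_boot all_order all_algebra.
From mathcomp Require Import ring.
From Stdlib Require Import Classical ClassicalEpsilon.
Set Implicit Arguments. Unset Strict Implicit. Unset Printing Implicit Defensive.
Import GRing.Theory Num.Theory.

Local Open Scope ring_scope.

Section AdditiveMaps.
Variables (M N : zmodType) (h : M -> N).
Hypothesis hD : {morph h : x y / x + y}.

Lemma additive0 : h 0 = 0.
Proof. by apply: (@addrI _ (h 0)); rewrite -hD !addr0. Qed.

Let hA : {additive M -> N} :=
  HB.pack h (GRing.isNmodMorphism.Build M N h (additive0, hD)).

Lemma additiveB x y : h (x - y) = h x - h y. Proof. exact: (raddfB hA). Qed.
Lemma additiveMz x z : h (x *~ z) = h x *~ z. Proof. exact: (raddfMz hA). Qed.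
Lemma additive_sum (I : Type) (r : seq I) (P : pred I) (F : I -> M) :
  h (\sum_(i <- r | P i) F i) = \sum_(i <- r | P i) h (F i).
Proof. exact: (raddf_sum hA). Qed.
End AdditiveMaps.

Section ZmodClosedPred.
Variables (M : zmodType) (H : {pred M}).
Hypothesis zcH : zmod_closed H.
Let Hc : zmodClosed M := HB.pack H (GRing.isZmodClosed.Build M H zcH).

Lemma zclosed0 : 0 \in H. Proof. exact: (rpred0 Hc). Qed.
Lemma zclosedN x : x \in H -> - x \in H.
Proof. by rewrite -sub0r; exact: (@rpredB M Hc 0 x zclosed0). Qed.
Lemma zclosedD x y : x \in H -> y \in H -> x + y \in H.
Proof. exact: (@rpredD M Hc x y). Qed.
Lemma zclosedB x y : x \in H -> y \in H -> x - y \in H.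
Proof. exact: (@rpredB M Hc x y). Qed.
Lemma zclosedMn x n : x \in H -> x *+ n \in H. Proof. exact: (@rpredMn M Hc n x). Qed.
Lemma zclosedMz x z : x \in H -> x *~ z \in H. Proof. exact: (@rpredMz M Hc z x). Qed.
End ZmodClosedPred.

Definition congZ (q r : rat) : bool := q - r \is a Num.int.

Lemma intqE q : is_intq q <-> q \is a Num.int.
Proof. by rewrite Qint_def; split => /eqP. Qed.

Lemma congZ0 q : congZ q 0 = (q \is a Num.int).
Proof. by rewrite /congZ subr0. Qed.

Lemma congZ_refl q : congZ q q.
Proof. by rewrite /congZ subrr. Qed.

Lemma congZ_trans q r s : congZ q r -> congZ r s -> congZ q s.
Proof. by move=> qr rs; rewrite /congZ -(subrKA r) rpredD. Qed.

Lemma congZD q1 r1 q2 r2 :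
  congZ q1 r1 -> congZ q2 r2 -> congZ (q1 + q2) (r1 + r2).
Proof. by move=> h1 h2; rewrite /congZ opprD addrACA rpredD. Qed.

Lemma congZN q r : congZ q r -> congZ (- q) (- r).
Proof. by rewrite /congZ -opprD rpredN. Qed.

Lemma congZMr c q r : c \is a Num.int -> congZ q r -> congZ (q * c) (r * c).
Proof. by move=> cZ qr; rewrite /congZ -mulrBl rpredM. Qed.

Lemma is_intq_congZD q x y : is_intq (q - x - y) <-> congZ q (x + y).
Proof. by rewrite /congZ opprD addrA; exact: intqE. Qed.

Section PrimePowerDenominators.
Variable p : nat.
Hypothesis p_pr : prime p.
Local Notation P := (p%:R : rat).

Lemma prime_natr_neq0 : P != 0.
Proof. by rewrite pnatr_eq0 -lt0n prime_gt0. Qed.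

Lemma in_Z1pP q : in_Z1p p q <-> exists k, q * P ^+ k \is a Num.int.
Proof.
split=> [[k dq]|[k /intrP[z qz]]].
  exists k; rewrite -natrX.
  have -> : ((p ^ k)%:R : rat) = (denq q)%:~R by rewrite dq.
  by rewrite -numqE intr_int.
have num_den : numq q * (p ^ k)%:Z = z * denq q.
  apply: (@intr_inj rat); rewrite !intrM -qz numqE.
  have -> : ((p ^ k)%:Z%:~R : rat) = P ^+ k by rewrite -natrX.
  ring.
have : (`|denq q| %| p ^ k)%N.
  have cop : coprime `|denq q| `|numq q| by rewrite coprime_sym coprime_num_den.
  have := congr1 absz num_den; rewrite !abszM /= => num_den_abs.
  by rewrite -(Gauss_dvdr _ cop) num_den_abs dvdn_mull.
by case/(dvdn_pfactor _ _ p_pr) => j _ dj; exists j; rewrite -absz_denq dj.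
Qed.

Lemma in_Z1pMX q a : in_Z1p p q -> in_Z1p p (q * P ^+ a).
Proof.
case/in_Z1pP=> k qk; apply/in_Z1pP; exists k.
by rewrite mulrAC rpredM // rpredX // natr_int.
Qed.

Lemma in_Z1p_divX q a : in_Z1p p q -> in_Z1p p (q / P ^+ a).
Proof.
case/in_Z1pP=> k qk; apply/in_Z1pP; exists (k + a)%N.
by rewrite exprD mulrA [q / _ * _]mulrAC divfK // expf_neq0 // prime_natr_neq0.
Qed.

Let denq_invp : denq P^-1 = p%:Z.
Proof. by rewrite -[P]/((p%:Z)%:~R) denqVz // eqz_nat -lt0n prime_gt0. Qed.

Lemma in_Z1p_invp : in_Z1p p P^-1.
Proof. by exists 1%N; rewrite expn1 denq_invp. Qed.

Lemma invp_notint : P^-1 \isn't a Num.int.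
Proof. by rewrite Qint_def denq_invp eqz_nat neq_ltn prime_gt1 ?orbT. Qed.

(* An element of [Z[1/p]/Z] of order larger than [p ^ b] generates every
   element of order dividing [p ^ b]; the multiplier comes from a Bezout
   relation between the numerator and the denominator. *)
Lemma Z1p_cyclic_cover r q b : in_Z1p p r ->
  r * P ^+ b \isn't a Num.int -> q * P ^+ b \is a Num.int ->
  exists z : int, congZ (r * z%:~R) q.
Proof.
move=> [c dr] rb_notint /intrP[w qw].
have rc : r * P ^+ c = (numq r)%:~R by rewrite numqE dr -natrX.
have lt_bc : (b < c)%N.
  rewrite ltnNge; apply: contraNN rb_notint => le_cb.
  by rewrite -(subnKC le_cb) exprD mulrA rc rpredM ?intr_int // rpredX // natr_int.
have /coprimezP[[al be] /= bezout] : coprimez (numq r) (p ^ c)%N.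
  by rewrite coprimezE -dr coprime_num_den.
have bez : al%:~R * (numq r)%:~R + be%:~R * P ^+ c = 1 :> rat.
  have := congr1 (fun t : int => t%:~R : rat) bezout.
  by rewrite intrD !intrM -pmulrn natrX.
have Pc : P ^+ c = P ^+ (c - b) * P ^+ b by rewrite -exprD subnK // ltnW.
exists (al * w * (p ^ (c - b))%N); rewrite /congZ.
have -> : r * (al * w * (p ^ (c - b))%N)%:~R - q = - (be%:~R * w%:~R * P ^+ (c - b)).
  apply: (mulIf (expf_neq0 b prime_natr_neq0)); rewrite !intrM -pmulrn natrX.
  transitivity (al%:~R * w%:~R * (r * P ^+ c) - q * P ^+ b); first by rewrite Pc; ring.
  transitivity (- (be%:~R * P ^+ c) * w%:~R); last by rewrite Pc; ring.
  by rewrite rc qw -[be%:~R * _](addKr (al%:~R * (numq r)%:~R)) bez; ring.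
by rewrite rpredN !rpredM ?intr_int // rpredX // natr_int.
Qed.
End PrimePowerDenominators.

Section QuasiAdditive.
Variables (M : zmodType) (H : {pred M}) (f : M -> rat).
Hypothesis zcH : zmod_closed H.
Hypothesis fD : {in H &, forall x y, congZ (f (x + y)) (f x + f y)}.

Lemma quasi_add0 : f 0 \is a Num.int.
Proof.
have := fD (zclosed0 zcH) (zclosed0 zcH); rewrite /congZ addr0.
have -> : f 0 - (f 0 + f 0) = - f 0 by ring.
by rewrite rpredN.
Qed.

Lemma quasi_addN x : x \in H -> congZ (f (- x)) (- f x).
Proof.
move=> Hx; have := rpredB quasi_add0 (fD (zclosedN zcH Hx) Hx); rewrite addNr /congZ.
by have -> : f 0 - (f 0 - (f (- x) + f x)) = f (- x) - - f x by ring.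
Qed.

Lemma quasi_addB x y : x \in H -> y \in H -> congZ (f (x - y)) (f x - f y).
Proof.
by move=> Hx Hy; apply: congZ_trans (fD Hx (zclosedN zcH Hy)) (congZD (congZ_refl _) _);
  apply: quasi_addN.
Qed.

Lemma quasi_addMn x n : x \in H -> congZ (f (x *+ n)) (f x * n%:R).
Proof.
move=> Hx; elim: n => [|n IHn]; first by rewrite mulr0n mulr0 congZ0 quasi_add0.
rewrite (mulrSr x) -natr1 mulrDr mulr1.
exact: congZ_trans (fD (zclosedMn zcH n Hx) Hx) (congZD IHn (congZ_refl _)).
Qed.

Lemma quasi_addMz x z : x \in H -> congZ (f (x *~ z)) (f x * z%:~R).
Proof.
move=> Hx; case: z => n; first by rewrite -!pmulrn quasi_addMn.
rewrite NegzE !mulrNz -!pmulrn mulrN.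
exact: congZ_trans (quasi_addN (zclosedMn zcH _ Hx)) (congZN (quasi_addMn _ Hx)).
Qed.

Lemma quasi_add_kernel : zmod_closed [pred x | (x \in H) && (f x \is a Num.int)].
Proof.
split=> [|x y]; first by rewrite inE zclosed0 // quasi_add0.
rewrite !inE => /andP[Hx fx] /andP[Hy fy]; rewrite zclosedB //=.
by have := rpredD (quasi_addB Hx Hy) (rpredB fx fy); rewrite subrK.
Qed.
End QuasiAdditive.

Definition prufer_map (M : zmodType) (p : nat) (H : {pred M}) (f : M -> rat) :=
  [/\ zmod_closed H, {in H, forall x, in_Z1p p (f x)},
      {in H &, forall x y, congZ (f (x + y)) (f x + f y)}
    & forall q, in_Z1p p q -> exists2 x, x \in H & congZ (f x) q].

(* [K] is recovered as [{x in H | f x \in Z}]. *)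
Lemma has_prufer_sectionP (M : zmodType) p :
  has_prufer_section M p <-> exists H (f : M -> rat), prufer_map p H f.
Proof.
split=> [[H [K [f [[zcH _ _] [fZ fD _ fsurj]]]]]|[H [f [zcH fZ fD fsurj]]]].
  exists H, f; split=> // [x y Hx Hy|q /fsurj[x Hx fxq]].
    exact/is_intq_congZD/fD.
  by exists x => //; apply/intqE.
pose K : {pred M} := [pred x | (x \in H) && (f x \is a Num.int)].
exists H, K, f; split; split=> //.
- exact: quasi_add_kernel.
- by move=> x /andP[].
- by move=> x y Hx Hy; apply/is_intq_congZD/fD.
- by move=> x Hx; rewrite inE Hx; exact: intqE.
- by move=> q /fsurj[x Hx fxq]; exists x => //; apply/intqE.
Qed.

Lemma trivial_no_prufer_section (M : zmodType) p :
  prime p -> (forall x : M, x = 0) -> ~ has_prufer_section M p.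
Proof.
move=> p_pr M0 /has_prufer_sectionP[H [f [zcH _ fD fsurj]]].
have [x _] := fsurj _ (in_Z1p_invp p_pr); rewrite (M0 x) /congZ => fx.
have := rpredB (quasi_add0 zcH fD) fx.
by rewrite subKr (negbTE (invp_notint p_pr)).
Qed.

Lemma prufer_section_quotient (M N : zmodType) (psi : N -> M) p :
  {morph psi : x y / x + y} -> (forall x, exists y, psi y = x) ->
  has_prufer_section M p -> has_prufer_section N p.
Proof.
move=> psiD psi_surj /has_prufer_sectionP[H [f [zcH fZ fD fsurj]]].
apply/has_prufer_sectionP; exists (pred_of_simpl [pred y | psi y \in H]), (f \o psi).
split.
- split=> [|y y']; rewrite !inE ?additive0 ?additiveB //; first exact: zclosed0.
  exact: zclosedB.
- by move=> y; apply: fZ.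
- by move=> y y' Hy Hy'; rewrite /= psiD; apply: fD.
- move=> q /fsurj[x Hx fxq]; have [y psiy] := psi_surj x.
  by exists y; rewrite /= ?inE psiy.
Qed.

Lemma prufer_map_of_unbounded (M : zmodType) p (H : {pred M}) (f : M -> rat) :
  prime p -> zmod_closed H -> {in H, forall x, in_Z1p p (f x)} ->
  {in H &, forall x y, congZ (f (x + y)) (f x + f y)} ->
  (forall b, exists2 x, x \in H & f x * p%:R ^+ b \isn't a Num.int) ->
  prufer_map p H f.
Proof.
move=> p_pr zcH fZ fD unbounded; split=> // q /(in_Z1pP p_pr)[b qb].
have [x Hx xb] := unbounded b.
have [z fxz] := Z1p_cyclic_cover p_pr (fZ x Hx) xb qb.
exists (x *~ z); first exact: zclosedMz.
exact: congZ_trans (quasi_addMz zcH fD z Hx) fxz.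
Qed.

Lemma pair_addE (M N : zmodType) (x x' : M) (y y' : N) :
  (x, y) + (x', y') = (x + x', y + y').
Proof. by []. Qed.

Lemma pair_subE (M N : zmodType) (x x' : M) (y y' : N) :
  (x, y) - (x', y') = (x - x', y - y').
Proof. by []. Qed.

Section BoundedFibre.
Variables (M N : zmodType) (p a : nat) (H : {pred M * N}) (f : M * N -> rat).
Hypotheses (p_pr : prime p) (Hf : prufer_map p H f).
Local Notation Pa := ((p%:R : rat) ^+ a).
Hypothesis bounded : forall x, (x, 0) \in H -> f (x, 0) * Pa \is a Num.int.

Let zcH : zmod_closed H. Proof. by case: Hf. Qed.
Let fD : {in H &, forall x y, congZ (f (x + y)) (f x + f y)}. Proof. by case: Hf. Qed.
Let Pa_int : Pa \is a Num.int. Proof. by rewrite rpredX // natr_int. Qed.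

Let chi (y : N) : M := epsilon (inhabits 0) (fun x => (x, y) \in H).

Let chiP x y : (x, y) \in H -> (chi y, y) \in H.
Proof. by move=> Hxy; apply: (epsilon_spec _ (fun x => (x, y) \in H)); exists x. Qed.

Let fibre_congZ x x' y : (x, y) \in H -> (x', y) \in H ->
  congZ (f (x, y) * Pa) (f (x', y) * Pa).
Proof.
move=> Hxy Hx'y.
have Hx0 : (x - x', 0) \in H.
  by have := zclosedB zcH Hxy Hx'y; rewrite pair_subE subrr.
have := congZMr Pa_int (quasi_addB zcH fD Hxy Hx'y).
rewrite pair_subE subrr /congZ => /(rpredB (bounded Hx0)).
by rewrite subKr mulrBl.
Qed.

Lemma bounded_fibre_prufer_section : has_prufer_section N p.
Proof.
have [_ fZ _ fsurj] := Hf; apply/has_prufer_sectionP.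
exists (pred_of_simpl [pred y | (chi y, y) \in H]), (fun y => f (chi y, y) * Pa).
split=> [|y Hy|y y' Hy Hy'|q].
- split=> [|y y' Hy Hy']; first exact/(chiP (x := 0))/(zclosed0 zcH).
  by have := zclosedB zcH Hy Hy'; rewrite pair_subE => /chiP.
- exact/in_Z1pMX/fZ.
- have Hyy' : (chi y + chi y', y + y') \in H.
    by have := zclosedD zcH Hy Hy'; rewrite pair_addE.
  rewrite -mulrDl; apply: congZ_trans (fibre_congZ (chiP Hyy') Hyy') _.
  exact/congZMr/fD.
- move=> /(in_Z1p_divX p_pr a)/fsurj[[x y] Hxy fxq].
  exists y; first by rewrite inE (chiP Hxy).
  apply: congZ_trans (fibre_congZ (chiP Hxy) Hxy) _.
  by rewrite -[q](divfK (expf_neq0 a (prime_natr_neq0 p_pr))); apply: congZMr.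
Qed.
End BoundedFibre.

(* Either the fibre [H] over [M] already maps onto [Z[1/p]/Z], or its
   denominators are bounded by some [p ^ a]; in the latter case
   [p ^ a * f] factors through the projection to [N]. *)
Lemma prufer_section_prod (M N : zmodType) p : prime p ->
  has_prufer_section (M * N)%type p ->
  has_prufer_section M p \/ has_prufer_section N p.
Proof.
move=> p_pr /has_prufer_sectionP[H [f Hf]]; have [zcH fZ fD _] := Hf.
pose H1 : {pred M} := [pred x | (x, 0) \in H].
have zcH1 : zmod_closed H1.
  split=> [|x x']; rewrite !inE; first exact: zclosed0.
  by move=> Hx Hx'; have := zclosedB zcH Hx Hx'; rewrite pair_subE subrr.
have fD1 : {in H1 &, forall x x', congZ (f (x + x', 0)) (f (x, 0) + f (x', 0))}.
  by move=> x x' Hx Hx'; have := fD _ _ Hx Hx'; rewrite pair_addE addr0.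
have [unbounded|] :=
  classic (forall b, exists2 x, x \in H1 & f (x, 0) * p%:R ^+ b \isn't a Num.int).
  left; apply/has_prufer_sectionP; exists H1, (fun x => f (x, 0)).
  by apply: prufer_map_of_unbounded => // x Hx; apply: fZ.
move=> /not_all_ex_not[a Na]; right.
apply: (bounded_fibre_prufer_section (a := a) p_pr Hf) => x Hx.
by apply/negPn/negP => nx; apply: Na; exists x.
Qed.

Lemma pi_spectral_prod pi (M N : zmodType) :
  pi_spectral pi M -> pi_spectral pi N -> pi_spectral pi (M * N)%type.
Proof. by move=> sM sN p p_pr /(prufer_section_prod p_pr)[/sM|/sN]; apply. Qed.

Definition Z_free (M : zmodType) (k : nat) (v : nat -> M) :=
  forall c : nat -> int,
    \sum_(i < k) v i *~ c i = 0 -> forall i, (i < k)%N -> c i = 0.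

Definition rank_le (M : zmodType) (n : nat) :=
  forall k (v : nat -> M), Z_free k v -> (k <= n)%N.

Lemma eq_Z_free (M : zmodType) k (v w : nat -> M) :
  (forall i, (i < k)%N -> v i = w i) -> Z_free k v -> Z_free k w.
Proof.
move=> vw vfree c wc; apply: vfree.
by rewrite -[RHS]wc; apply: eq_bigr => i _; rewrite vw.
Qed.

Lemma Z_independentE (M : zmodType) (s : seq M) :
  Z_independent s <-> Z_free (size s) (nth 0 s).
Proof.
split=> [sfree c sc i lt_is|sfree c size_c sc i].
  have := sfree (mkseq c (size s)); rewrite size_mkseq => /(_ erefl).
  have -> : \sum_(i < size s) s`_i *~ (mkseq c (size s))`_i = 0.
    by rewrite -[RHS]sc; apply: eq_bigr => j _; rewrite nth_mkseq.
  by move=> /(_ erefl i); rewrite nth_mkseq.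
have [lt_is|le_si] := ltnP i (size s); first exact: sfree sc i lt_is.
by rewrite nth_default // size_c.
Qed.

Lemma finite_tf_rankP (M : zmodType) : finite_tf_rank M <-> exists n, rank_le M n.
Proof.
split=> -[n Mn]; exists n; last by move=> s /Z_independentE/Mn.
move=> k v vfree.
have := Mn (mkseq v k); rewrite size_mkseq; apply; apply/Z_independentE.
by rewrite size_mkseq; apply: eq_Z_free vfree => i lt_ik; rewrite nth_mkseq.
Qed.

Lemma rank_le_trivial (M : zmodType) : (forall x : M, x = 0) -> rank_le M 0.
Proof.
move=> M0 k v vfree; rewrite leqn0; apply: contraT; rewrite -lt0n => k_gt0.
have /eqP := vfree (fun=> 1) (M0 _) 0%N k_gt0.
by rewrite oner_eq0.
Qed.

Lemma rank_le_inj (M N : zmodType) (phi : M -> N) n :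
  {morph phi : x y / x + y} -> injective phi -> rank_le N n -> rank_le M n.
Proof.
move=> phiD phi_inj Nn k v vfree; apply: (Nn k (phi \o v)) => c vc; apply: vfree.
apply: phi_inj; rewrite additive_sum // additive0 // -[RHS]vc.
by apply: eq_bigr => i _; rewrite additiveMz.
Qed.

Lemma exists_relation (M : zmodType) n k (v : nat -> M) : rank_le M n -> (n < k)%N ->
  exists c : nat -> int, \sum_(i < k) v i *~ c i = 0 /\ exists2 i, (i < k)%N & c i != 0.
Proof.
move=> Mn lt_nk; apply: NNPP => no_rel.
suff: (k <= n)%N by rewrite leqNgt lt_nk.
apply: (Mn k v) => c vc i lt_ik; apply/eqP; apply: contraT => ci.
by case: no_rel; exists c; split; last exists i.
Qed.

(* A relation among [y \o bump i0], read as a relation among [y]. *)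
Definition skip_coef (i0 : nat) (d : nat -> int) (i : nat) : int :=
  if i == i0 then 0 else d (unbump i0 i).

Lemma skip_coef_bump i0 d i : skip_coef i0 d (bump i0 i) = d i.
Proof. by rewrite /skip_coef eq_sym (negbTE (neq_bump _ _)) bumpK. Qed.

Lemma sum_skip_coef (M : zmodType) k (y : nat -> M) i0 d : (i0 < k.+1)%N ->
  \sum_(i < k.+1) y i *~ skip_coef i0 d i = \sum_(i < k) y (bump i0 i) *~ d i.
Proof.
move=> lt_i0k; rewrite (bigD1_ord (Ordinal lt_i0k)) //= /skip_coef eqxx mulr0z add0r.
by apply: eq_bigr => i _; rewrite -[in RHS](skip_coef_bump i0 d).
Qed.

(* Gaussian elimination: any [n.+1] of the elements satisfy a relation, whose
   pivot [i0] is then removed before recursing. *)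
Lemma echelon_relations (N : zmodType) n : rank_le N n -> forall k (y : nat -> N),
  exists r (cs : nat -> nat -> int) (ps : nat -> nat),
   [/\ (k - n <= r)%N,
       forall j, (j < r)%N -> \sum_(i < k) y i *~ cs j i = 0,
       forall j, (j < r)%N -> (ps j < k)%N,
       forall j, (j < r)%N -> cs j (ps j) != 0
     & forall j l, (l < j < r)%N -> cs j (ps l) = 0].
Proof.
move=> Nn; elim=> [|k IHk] y.
  by exists 0%N, (fun _ _ => 0), (fun _ => 0%N); split.
have [le_kn|lt_nk] := leqP k.+1 n.
  by exists 0%N, (fun _ _ => 0), (fun _ => 0%N); split; rewrite // leqn0 subn_eq0.
have [c [yc [i0 lt_i0k ci0]]] := exists_relation y Nn lt_nk.
have [r [cs [ps [ge_r ycs lt_ps cs_piv cs_echelon]]]] := IHk (y \o bump i0).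
exists r.+1, (fun j => if j is j'.+1 then skip_coef i0 (cs j') else c),
  (fun j => if j is j'.+1 then bump i0 (ps j') else i0).
split=> [|[|j]|[|j]|[|j]|[|j] [|l]] //=.
- by rewrite subSn //; apply: leq_trans ge_r _.
- by move=> lt_jr; rewrite sum_skip_coef //; apply: ycs.
- by move=> lt_jr; exact: (@lift_subproof k.+1 i0 (Ordinal (lt_ps _ lt_jr))).
- by move=> lt_jr; rewrite skip_coef_bump cs_piv.
- by rewrite /skip_coef eqxx.
- by move=> lt_ljr; rewrite skip_coef_bump cs_echelon.
Qed.

Lemma echelon_comb_eq0 r (cs : nat -> nat -> int) (ps : nat -> nat) (d : nat -> int) :
  (forall j, (j < r)%N -> cs j (ps j) != 0) ->
  (forall j l, (l < j < r)%N -> cs j (ps l) = 0) ->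
  (forall j, (j < r)%N -> \sum_(l < r) d l * cs l (ps j) = 0) ->
  forall j, (j < r)%N -> d j = 0.
Proof.
move=> cs_piv cs_echelon dcs; elim/ltn_ind=> j IHj lt_jr.
have := dcs j lt_jr; rewrite (bigD1 (Ordinal lt_jr)) //= big1 ?addr0.
  by move/eqP; rewrite mulf_eq0 (negbTE (cs_piv _ lt_jr)) orbF => /eqP.
move=> l /negbTE; rewrite -val_eqE /= => l_neq_j.
have [lt_lj|lt_jl] := ltnP l j; first by rewrite IHj ?mul0r // (ltn_trans lt_lj).
rewrite cs_echelon ?mulr0 //; rewrite ltn_neqAle eq_sym l_neq_j lt_jl /=.
exact: ltn_ord.
Qed.

(* Relations among the second components of [k > m + n] elements give more
   than [m] elements of [M], which are dependent; the resulting combination of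
   relations is nontrivial because the relations are in echelon form. *)
Lemma rank_le_prod (M N : zmodType) m n :
  rank_le M m -> rank_le N n -> rank_le (M * N)%type (m + n).
Proof.
move=> Mm Nn k v vfree; rewrite leqNgt; apply/negP => lt_mnk.
have [r [cs [ps [ge_r vcs lt_ps cs_piv cs_echelon]]]] :=
  echelon_relations Nn k (fun i => (v i).2).
have lt_mr : (m < r)%N by apply: leq_trans ge_r; rewrite ltn_subRL addnC.
pose z j := \sum_(i < k) (v i).1 *~ cs j i.
have [d [zd [j0 lt_j0r dj0]]] := exists_relation z Mm lt_mr.
pose e i := \sum_(j < r) d j * cs j i.
have sum_e (U : zmodType) (u : nat -> U) :
    \sum_(i < k) u i *~ e i = \sum_(j < r) (\sum_(i < k) u i *~ cs j i) *~ d j.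
  rewrite /e; under eq_bigr => i _ do rewrite mulrz_sumr.
  rewrite exchange_big /=; apply: eq_bigr => j _; rewrite mulrz_suml.
  by apply: eq_bigr => i _; rewrite mulrC mulrzA.
have ve : \sum_(i < k) v i *~ e i = 0.
  have ve1 : (\sum_(i < k) v i *~ e i).1 = 0.
    by rewrite raddf_sum; under eq_bigr do rewrite raddfMz; rewrite (sum_e _ (fst \o v)).
  have ve2 : (\sum_(i < k) v i *~ e i).2 = 0.
    rewrite raddf_sum; under eq_bigr do rewrite raddfMz; rewrite (sum_e _ (snd \o v)).
    by rewrite big1 // => j _; rewrite vcs ?mul0rz.
  by rewrite [LHS]surjective_pairing ve1 ve2.
move/negP: dj0; apply.
apply/eqP; apply: (echelon_comb_eq0 cs_piv cs_echelon) lt_j0r => j lt_jr.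
exact: (vfree e ve (ps j) (lt_ps _ lt_jr)).
Qed.

Section FinitePowers.
Variable P : zmodType -> Prop.
Hypothesis P_iso : forall (M N : zmodType) (phi : M -> N) (psi : N -> M),
  {morph phi : x y / x + y} -> {morph psi : x y / x + y} ->
  cancel phi psi -> cancel psi phi -> P M -> P N.
Hypothesis P_prod : forall M N : zmodType, P M -> P N -> P (M * N)%type.
Hypothesis P_trivial : forall M : zmodType, (forall x : M, x = 0) -> P M.

Lemma ffun_ord_power_closed (B : zmodType) n : P B -> P {ffun 'I_n -> B}.
Proof.
move=> PB; elim: n => [|n IHn]; first by apply: P_trivial => x; apply/ffunP => -[].
pose cons0 (z : B * {ffun 'I_n -> B}) : {ffun 'I_n.+1 -> B} :=
  [ffun i => if unlift ord0 i is Some j then z.2 j else z.1].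
pose uncons0 (x : {ffun 'I_n.+1 -> B}) :=
  (x ord0, [ffun j => x (lift ord0 j)] : {ffun 'I_n -> B}).
have := @P_iso _ _ cons0 uncons0; apply; rewrite /cons0 /uncons0 //.
- move=> z z'; apply/ffunP => i; rewrite !ffunE.
  by case: unlift => //= j; rewrite ffunE.
- by move=> x x'; rewrite !ffunE; congr pair; apply/ffunP => j; rewrite !ffunE.
- case=> b z; rewrite ffunE unlift_none; congr pair.
  by apply/ffunP => j; rewrite !ffunE liftK.
- by move=> x; apply/ffunP => i; rewrite ffunE; case: unliftP => [j|] ->; rewrite ?ffunE.
- exact: P_prod.
Qed.

Lemma ffun_power_closed (J : finType) (B : zmodType) : P B -> P {ffun J -> B}.
Proof.
move=> /(ffun_ord_power_closed #|J|).
have := @P_iso _ _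
  (fun y : {ffun 'I_#|J| -> B} => [ffun j => y (enum_rank j)] : {ffun J -> B})
  (fun x : {ffun J -> B} => [ffun k => x (enum_val k)] : {ffun 'I_#|J| -> B}).
apply.
- by move=> y y'; apply/ffunP => j; rewrite !ffunE.
- by move=> x x'; apply/ffunP => k; rewrite !ffunE.
- by move=> y; apply/ffunP => k; rewrite !ffunE enum_valK.
- by move=> x; apply/ffunP => j; rewrite !ffunE enum_rankK.
Qed.
End FinitePowers.

Lemma finite_tf_rank_ffun (J : finType) (B : zmodType) :
  finite_tf_rank B -> finite_tf_rank {ffun J -> B}.
Proof.
apply: ffun_power_closed => [M N phi psi _ psiD phiK psiK|M N|M M0].
- move=> /finite_tf_rankP[n Mn]; apply/finite_tf_rankP; exists n.
  exact: rank_le_inj psiD (can_inj psiK) Mn.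
- move=> /finite_tf_rankP[m Mm] /finite_tf_rankP[n Nn].
  by apply/finite_tf_rankP; exists (m + n)%N; apply: rank_le_prod.
- by apply/finite_tf_rankP; exists 0%N; apply: rank_le_trivial.
Qed.

Lemma pi_spectral_ffun pi (J : finType) (B : zmodType) :
  pi_spectral pi B -> pi_spectral pi {ffun J -> B}.
Proof.
apply: ffun_power_closed => [M N phi psi phiD _ _ psiK sM p p_pr|M N|M M0 p p_pr].
- have psi_surj y : exists x, phi x = y by exists (psi y).
  by move=> /(prufer_section_quotient phiD psi_surj); apply: sM.
- exact: pi_spectral_prod.
- by move/(trivial_no_prufer_section p_pr M0).
Qed.

Lemma torsion_free_ffun (J : finType) (B : zmodType) :
  torsion_free B -> torsion_free {ffun J -> B}.
Proof.
move=> tfB n x nx0; apply/ffunP => j; rewrite ffunE; apply: (tfB n).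
by rewrite -ffunMnE nx0 ffunE.
Qed.

Lemma torsion_free_finite_p_rank (M : zmodType) p :
  torsion_free M -> prime p -> finite_p_rank M p.
Proof.
move=> tfM p_pr; exists 0%N => s s_tors s_free; rewrite leqn0; apply: contraT => s_nil.
have s0 i : s`_i = 0.
  have [lt_is|] := ltnP i (size s); last by move=> le_si; rewrite nth_default.
  by have := s_tors _ (mem_nth 0 lt_is); rewrite -(prednK (prime_gt0 p_pr)) => /tfM.
have := s_free (nseq (size s) 1%N); rewrite size_nseq => /(_ erefl).
rewrite big1 => [/(_ erefl 0%N)|i _]; last by rewrite s0 mul0rn.
by rewrite nth_nseq lt0n s_nil dvdn1 => /eqP p1; rewrite p1 in p_pr.
Qed.

Section Transversal.
Variables (G : groupType) (G0 : {pred G}).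
Hypothesis G0_sub : is_subgroup G0.
Local Open Scope group_scope.

Lemma subgroup1 : 1 \in G0. Proof. by case: G0_sub. Qed.

Lemma subgroupV x : x \in G0 -> x^-1 \in G0. Proof. exact: group_closedV. Qed.

Lemma subgroupM x y : x \in G0 -> y \in G0 -> x * y \in G0.
Proof. exact: group_closedM. Qed.

(* [J] indexes the left cosets of [G0]: the positions in a covering list of
   coset representatives that are the first to represent their coset. *)
Lemma finite_index_transversal : finite_index G0 ->
  exists (J : finType) (T : J -> G) (idx : G -> J),
    (forall g, (T (idx g))^-1 * g \in G0) /\
    (forall g j, (T j)^-1 * g \in G0 -> j = idx g).
Proof.
move=> [s cover].
pose idx0 (g : G) := find (fun t => t^-1 * g \in G0) s.
have idx0_eq u v : u^-1 * v \in G0 -> idx0 u = idx0 v.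
  move=> uv; apply: eq_find => t /=; apply/idP/idP => [tu|tv].
    by have := subgroupM tu uv; rewrite mulgA mulgK.
  by have := subgroupM tv (subgroupV uv); rewrite invgM invgK mulgA mulgK.
have has_rep g : has (fun t => t^-1 * g \in G0) s.
  by have [t st tg] := cover g; apply/hasP; exists t.
have lt_idx0 g : (idx0 g < size s)%N by rewrite -has_find.
have rep_idx0 g : (nth 1 s (idx0 g))^-1 * g \in G0 := nth_find 1 (has_rep g).
pose first_rep (i : 'I_(size s)) := idx0 (nth 1 s i) == i.
have first_rep_idx0 g : first_rep (Ordinal (lt_idx0 g)).
  by rewrite /first_rep /= (idx0_eq _ _ (rep_idx0 g)).
exists {i : 'I_(size s) | first_rep i}, (fun j => nth 1 s (val (val j))).
exists (fun g => exist _ (Ordinal (lt_idx0 g)) (first_rep_idx0 g)).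
split=> // g [[j lt_js] first_j] /= jg.
by apply/val_inj/val_inj; rewrite /= -(idx0_eq _ _ jg); apply/esym/eqP.
Qed.
End Transversal.

Section InducedModule.
Variables (G : groupType) (G0 : {pred G}) (J : finType) (T : J -> G) (idx : G -> J).
Hypothesis G0_sub : is_subgroup G0.
Hypothesis T_idx : forall g, ((T (idx g))^-1 * g \in G0)%g.
Hypothesis idx_T : forall g j, ((T j)^-1 * g \in G0)%g -> j = idx g.
Variables (B A : zmodType) (actB : G -> B -> B) (actA : G -> A -> A) (f : B -> A).
Local Open Scope group_scope.

Lemma idx_rep j : idx (T j) = j.
Proof. by apply/esym/idx_T; rewrite mulVg subgroup1. Qed.

Definition ind_cocycle g i := (T i)^-1 * g * T (idx (g^-1 * T i)).

Lemma ind_cocycle_in g i : ind_cocycle g i \in G0.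
Proof.
by have := subgroupV G0_sub (T_idx (g^-1 * T i)); rewrite /ind_cocycle !invgM !invgK.
Qed.

Lemma idx_actM g h i : idx ((g * h)^-1 * T i) = idx (h^-1 * T (idx (g^-1 * T i))).
Proof.
set j := idx (g^-1 * T i); apply/esym/idx_T.
have := subgroupM G0_sub (T_idx (h^-1 * T j)) (T_idx (g^-1 * T i)).
by rewrite invgM !mulgA mulgK.
Qed.

Lemma idx_act_inj g : injective (fun i => idx (g^-1 * T i)).
Proof.
move=> i1 i2 /= eq_idx; rewrite -(idx_rep i2); apply: idx_T.
have := subgroupM G0_sub (subgroupV G0_sub (T_idx (g^-1 * T i1))) (T_idx (g^-1 * T i2)).
by rewrite eq_idx !invgM invgK !mulgA mulgVK mulgK.
Qed.

Definition ind_act g (phi : {ffun J -> B}) : {ffun J -> B} :=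
  [ffun i => actB (ind_cocycle g i) (phi (idx (g^-1 * T i)))].

Definition ind_map (phi : {ffun J -> B}) : A := (\sum_i actA (T i) (f (phi i)))%R.

Lemma ind_act_action : is_action G0 actB -> is_action predT ind_act.
Proof.
move=> [actBD actB1 actBM]; split=> [g x y _|x|g h x _ _].
- by apply/ffunP => i; rewrite !ffunE actBD // ind_cocycle_in.
- apply/ffunP => i; rewrite ffunE /ind_cocycle invg1 mul1g idx_rep mulg1 mulVg.
  exact: actB1.
apply/ffunP => i; rewrite !ffunE idx_actM -actBM ?ind_cocycle_in //.
by congr (actB _ _); rewrite /ind_cocycle idx_actM !mulgA mulgK.
Qed.

Lemma ind_map_quotient : is_action predT actA -> module_quotient_map G0 actB actA f ->
  module_quotient_map predT ind_act actA ind_map.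
Proof.
move=> [actAD actA1 actAM] [fD fsurj fequiv].
have actA_add g : {morph actA g : x y / (x + y)%R} by move=> x y; apply: actAD.
split=> [x y|a|g x _].
- by rewrite -big_split /=; apply: eq_bigr => i _; rewrite ffunE fD actAD.
- pose i0 := idx 1; have [b fb] := fsurj (actA (T i0)^-1 a).
  exists [ffun i => if i == i0 then b else 0%R].
  rewrite /ind_map (bigD1 i0) //= ffunE eqxx fb -actAM // mulgV actA1 big1 ?addr0 //.
  by move=> i /negbTE i_neq_i0; rewrite ffunE i_neq_i0 additive0 // additive0.
rewrite /ind_map (additive_sum (actA_add g)) [RHS](reindex_inj (@idx_act_inj g)) /=.
apply: eq_bigr => i _; rewrite ffunE fequiv ?ind_cocycle_in // -!actAM //.
by rewrite /ind_cocycle !mulgA mulgV mul1g.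
Qed.
End InducedModule.

Theorem lemma4p3 (pi : pred nat) (G : groupType) (G0 : {pred G})
  (hG0 : is_subgroup G0) (hfin : finite_index G0)
  (A : zmodType) (actA : G -> A -> A) (hA : is_action predT actA)
  (hB : exists (B : zmodType) (actB : G -> B -> B),
          [/\ is_action G0 actB, torsion_free B, finite_rank B, pi_spectral pi B
            & exists f : B -> A, module_quotient_map G0 actB actA f]) :
  exists (C : zmodType) (actC : G -> C -> C),
    [/\ is_action predT actC, torsion_free C, finite_rank C, pi_spectral pi C
      & exists f : C -> A, module_quotient_map predT actC actA f].
Proof.
have [J [T [idx [T_idx idx_T]]]] := finite_index_transversal hG0 hfin.
have [B [actB [actB_act tfB [tf_rankB _] spB [f fquot]]]] := hB.
exists {ffun J -> B}, (ind_act T idx actB); split.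
- exact (ind_act_action hG0 T_idx idx_T actB_act).
- exact: torsion_free_ffun.
- split=> [|p p_pr]; first exact: finite_tf_rank_ffun.
  exact/torsion_free_finite_p_rank/p_pr/torsion_free_ffun.
- exact: pi_spectral_ffun.
- by exists (ind_map T actA f); exact (ind_map_quotient hG0 T_idx idx_T hA fquot).
Qed.
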